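(* Consider Generalized FTPL with a $(\kappa,\delta)$-admissible translation matrix $\Gamma\in[0,1]^{|\mathcal X|\times N}$, accuracy $\epsilon\ge0$, and a $\big(\rho,\frac{1+2\epsilon}{\delta}\big)$-dispersed distribution $D$. Then \[ \mathbb{E}\Big[\sum_{t=1}^T f(x_{t+1},y_t)-f(x_t,y_t)\Big]\le 2TN\kappa\rho . \]
   Context: Online learning setting: $\mathcal X$ finite set of learner actions, $\mathcal Y$ set of adversary actions, $f:\mathcal X\times\mathcal Y\to[0,1]$; adversary sequence $y_1,\dots,y_T$ fixed in advance. Generalized FTPL with parameters $(\Gamma,D,\epsilon)$: draw $\alpha_1,\dots,\alpha_N$ i.i.d. from $D$ once; for each $t=1,\dots,T+1$, $x_t$ is any action (a function of $\vec\alpha$ and $y_1,\dots,y_{t-1}$) with $\sum_{\tau<t}f(x_t,y_\tau)+\vec\alpha\cdot\Gamma_{x_t}\ge\sum_{\tau<t}f(x,y_\tau)+\vec\alpha\cdot\Gamma_x-\epsilon$ for all $x\in\mathcal X$; here $\Gamma_x$ is the row of $\Gamma$ indexed by $x$. A matrix $\Gamma$ is admissible if its rows are pairwise distinct; it is $(\kappa,\delta)$-admissible if it is admissible, each column contains at most $\kappa$ distinct values, and any two distinct values in the same column differ by at least $\delta$. A distribution $D$ on $\mathbb R$ is $(\rho,L)$-dispersed if every interval of length $L$ has $D$-probability at most $\rho$. *)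

From HB Require Import structures.
From mathcomp Require Import all_boot all_order all_algebra.
From mathcomp Require Import all_classical all_reals all_analysis.
Set Implicit Arguments. Unset Strict Implicit. Unset Printing Implicit Defensive.
Import Order.TTheory GRing.Theory Num.Theory.
Local Open Scope classical_set_scope.
Local Open Scope ring_scope.

(* Gamma : X -> 'I_N -> R, Gamma x is the row of the matrix indexed by x. *)

Definition admissible (R : realType) (X : finType) (N : nat)
  (Gamma : X -> 'I_N -> R) : Prop :=
  forall x x' : X, (forall j, Gamma x j = Gamma x' j) -> x = x'.

Definition kd_admissible (R : realType) (X : finType) (N : nat)
  (Gamma : X -> 'I_N -> R) (kappa : nat) (delta : R) : Prop :=
  [/\ admissible Gamma,
      (forall j : 'I_N, (size (undup [seq Gamma x j | x <- enum X]) <= kappa)%N)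
    & (forall (j : 'I_N) (x x' : X), Gamma x j != Gamma x' j ->
          delta <= `|Gamma x j - Gamma x' j|)].

(* (rho, L)-dispersed distribution on R: every interval of length L has
   probability at most rho (closed intervals [a, a+L] are the largest ones). *)
Definition dispersed (R : realType) (D : probability R R) (rho L : R) : Prop :=
  forall a : R, (D `[a, (a + L)%R]%classic <= rho%:E)%E.

Definition iid_law (R : realType) (N : nat) (D : probability R R)
  (P : probability (N.-tuple R) R) : Prop :=
  forall A : 'I_N -> set R, (forall i, measurable (A i)) ->
    P [set a : N.-tuple R | forall i, A i (tnth a i)] = (\prod_(i < N) D (A i))%E.

Definition pert (R : realType) (X : finType) (N : nat)
  (Gamma : X -> 'I_N -> R) (a : N.-tuple R) (x : X) : R :=
  \sum_(j < N) tnth a j * Gamma x j.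

(* sel t a = x_t (for t = 1..T+1) is a valid run of Generalized FTPL with
   parameters (Gamma, D, eps) against the sequence y (y_1, ..., y_T). *)
Definition gftpl_run (R : realType) (Y : Type) (N T : nat)
  (X' : finType) (f : X' -> Y -> R) (Gamma : X' -> 'I_N -> R) (eps : R)
  (y : nat -> Y) (sel : nat -> N.-tuple R -> X') : Prop :=
  forall (t : nat), (1 <= t <= T.+1)%N -> forall (a : N.-tuple R) (x : X'),
    \sum_(1 <= tau < t) f x (y tau) + pert Gamma a x - eps <=
    \sum_(1 <= tau < t) f (sel t a) (y tau) + pert Gamma a (sel t a).

From mathcomp Require Import all_boot all_order all_algebra.
From mathcomp Require Import all_classical all_reals all_analysis.
From mathcomp Require Import lra measurable_realfun.
Import Order.TTheory GRing.Theory Num.Theory.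
Local Open Scope classical_set_scope.
Local Open Scope ring_scope.
Set Implicit Arguments. Unset Strict Implicit. Unset Printing Implicit Defensive.

(* If x_t <> x_{t+1}, admissibility gives a column j with
   Gamma_{x_t j} = v <> Gamma_{x_{t+1} j}, so the loss difference at round t is
   bounded by the number of "switches" (t, j, v), each one upward or downward.
   Freeze every perturbation but alpha_j.  Comparing the eps-optimality of x_t
   at alpha_j = b2 with that of x_{t+1} at alpha_j = b1 (their cumulative
   losses differ by a single term in [0, 1]) gives
     (b2 - b1) (Gamma_{x_{t+1} j} - Gamma_{x_t j}) <= 1 + 2 eps,
   and distinct values of column j are delta apart, so the alpha_j for which a
   given switch occurs lie in an interval of length (1 + 2 eps) / delta, of
   D-probability at most rho.  Summing over the two directions, the at most
   kappa values v of each of the N columns and the T rounds gives 2 T N kappa rho. *)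

Section set_tnth.
Context d (T : measurableType d) (N : nat) (j : 'I_N).

Definition set_tnth (p : N.-tuple T * T) : N.-tuple T :=
  [tuple (if i == j then p.2 else tnth p.1 i) | i < N].

Lemma tnth_set_tnth p i : tnth (set_tnth p) i = if i == j then p.2 else tnth p.1 i.
Proof. by rewrite tnth_mktuple. Qed.

Lemma measurable_set_tnth : measurable_fun setT set_tnth.
Proof.
apply/measurable_fun_tnthP => i.
rewrite (_ : _ \o _ = fun p => if i == j then p.2 else tnth p.1 i); last first.
  by apply: funext => p /=; rewrite tnth_set_tnth.
case: (i == j); first exact: measurable_snd.
exact: measurableT_comp (measurable_tnth i) measurable_fst.
Qed.

End set_tnth.

Section boxes.
Context d (T : measurableType d) (N : nat).

Definition box (A : 'I_N -> set T) : set (N.-tuple T) :=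
  [set a | forall i, A i (tnth a i)].

Definition boxes : set (set (N.-tuple T)) :=
  [set S | exists2 A : 'I_N -> set T, (forall i, measurable (A i)) & S = box A].

Lemma measurable_box (A : 'I_N -> set T) :
  (forall i, measurable (A i)) -> measurable (box A).
Proof.
move=> mA.
have -> : box A = \bigcap_(i in setT) ((@tnth N T)^~ i @^-1` A i).
  by apply/seteqP; split => [a Ha i _|a Ha i] //=; exact: Ha.
apply: fin_bigcap_measurable => [|i _]; first exact: finite_finset.
by rewrite -[X in measurable X]setTI; exact: measurable_tnth.
Qed.

Lemma measurable_boxes : measurable = <<s boxes >>.
Proof.
apply/seteqP; split; last first.
  apply: smallest_sub; first exact: sigma_algebra_measurable.
  by move=> _ [A mA ->]; exact: measurable_box.
apply: smallest_sub; first exact: smallest_sigma_algebra.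
rewrite -bigcup_seq; apply: bigcup_sub => i _ _ [B mB <-].
apply: sub_sigma_algebra.
exists (fun k => if k == i then B else setT) => [k|]; first by case: ifP.
apply/seteqP; split => [a [_ Ba] k|a Ha]; first by case: ifP => [/eqP ->|].
by split => //; have := Ha i; rewrite eqxx.
Qed.

Lemma setI_closed_boxes : setI_closed boxes.
Proof.
move=> _ _ [A mA ->] [B mB ->].
exists (fun k => A k `&` B k) => [k|]; first exact: measurableI.
by apply/seteqP; split => [a [HA HB] k|a H]; [split|split => k; have [] := H k].
Qed.

Lemma set_tnth_preimage_box (j : 'I_N) (A : 'I_N -> set T) :
  set_tnth j @^-1` box A = box (fun k => if k == j then setT else A k) `*` A j.
Proof.
apply/seteqP; split => [[a b] /= H|[a b] [/= H1 H2] i].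
  split => [i|] /=; last by have := H j; rewrite tnth_set_tnth eqxx.
  by case: ifP => // /negbT ij; have := H i; rewrite tnth_set_tnth (negbTE ij).
by rewrite tnth_set_tnth; case: ifP => [/eqP -> //|ij]; have := H1 i; rewrite ij.
Qed.

End boxes.

Section thin_sets.
Local Open Scope ereal_scope.
Context (R : realType) (rho L : R).

Lemma measure_thin_le (nu : {measure set R -> \bar R}) (E : set R) :
  (forall a, nu `[a, (a + L)%R]%classic <= rho%:E) -> measurable E ->
  (forall b1 b2, E b1 -> E b2 -> (b2 - b1 <= L)%R) -> nu E <= rho%:E.
Proof.
move=> thin mE diamE.
have [->|/set0P [b0 Eb0]] := eqVneq E set0.
  by rewrite measure0; apply: le_trans (thin 0%R); exact: measure_ge0.
have lbE : has_lbound E by exists (b0 - L)%R => b /diamE/(_ Eb0); lra.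
apply: le_trans (thin (inf E)); apply: le_measure; rewrite ?inE //.
move=> b Eb /=; rewrite in_itv /= ge_inf //=.
rewrite -lerBlDr; apply: lb_le_inf; first by exists b0.
by move=> b' /diamE/(_ Eb); rewrite lerBlDr addrC -lerBlDr.
Qed.

Lemma product_measure1_thin_le d (T : measurableType d) (mu : probability T R)
    (nu : {sigma_finite_measure set R -> \bar R}) (A : set (T * R)) :
  (forall a, nu `[a, (a + L)%R]%classic <= rho%:E) -> measurable A ->
  (forall x b1 b2, A (x, b1) -> A (x, b2) -> (b2 - b1 <= L)%R) ->
  (mu \x nu) A <= rho%:E.
Proof.
move=> thin mA diamA.
have rho0 : (0 <= rho)%R by rewrite -lee_fin; apply: le_trans (thin 0%R).
apply: (@le_trans _ _ (\int[mu]_x (cst rho%:E) x)).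
  apply: ge0_le_integral => //; first exact: measurable_fun_xsection.
  move=> x _ /=; rewrite xsectionE; apply: measure_thin_le => //.
    by rewrite -xsectionE; exact: measurable_xsection.
  exact: diamA.
rewrite integral_cst // -[leRHS]mule1 lee_pmul // ?lee_fin //.
exact: probability_le1.
Qed.

End thin_sets.

Section iid_law.
Local Open Scope ereal_scope.
Context (R : realType) (N : nat) (D : probability R R)
  (P : probability (N.-tuple R) R).
Hypothesis iidP : iid_law D P.

Lemma iid_law_box (A : 'I_N -> set R) : (forall i, measurable (A i)) ->
  P (box A) = \prod_(i < N) D (A i).
Proof. exact: iidP. Qed.

Lemma iid_law_set_tnth (j : 'I_N) (S : set (N.-tuple R)) : measurable S ->
  P S = (P \x D) (set_tnth j @^-1` S).
Proof.
move=> mS; apply: (measure_unique (@boxes _ R N) (fun _ => setT) (@measurable_boxes _ R N)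
  (@setI_closed_boxes _ R N) _ _ P (pushforward (P \x D) (set_tnth j))) => //.
- by move=> _; exists (fun _ => setT) => //; apply/seteqP; split.
- by apply/seteqP; split => // x _; exists 0%N.
- exact: measurable_set_tnth.
- move=> mf _ [A mA ->] /=; rewrite /pushforward set_tnth_preimage_box.
  have mA' k : measurable (if k == j then setT else A k) by case: ifP.
  rewrite (iid_law_box mA) product_measure1E //; last exact: measurable_box.
  have -> : \prod_(i < N) D (A i) =
      (\prod_(i < N) D (if i == j then setT else A i)) * D (A j).
    rewrite (bigD1 j) //= [in RHS](bigD1 j) //= eqxx probability_setT mul1e muleC.
    by congr (_ * _); apply: eq_bigr => k /negbTE ->.
  by congr (_ * _); apply/esym/iid_law_box.
- by move=> _; apply: (le_lt_trans (probability_le1 _ _)) => //; exact: ltry.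
Qed.

Lemma iid_law_thin_le (j : 'I_N) (rho L : R) (S : set (N.-tuple R)) :
  dispersed D rho L -> measurable S ->
  (forall a b1 b2, S (set_tnth j (a, b1)) -> S (set_tnth j (a, b2)) -> (b2 - b1 <= L)%R) ->
  P S <= rho%:E.
Proof.
move=> disp mS diamS; rewrite (iid_law_set_tnth j mS).
apply: (@product_measure1_thin_le R rho L _ _ P D) => //.
by rewrite -[X in measurable X]setTI; exact: measurable_set_tnth.
Qed.

End iid_law.

Section finite_valued.
Context d (T : measurableType d) (X : finType) (g1 g2 : T -> X).
Hypotheses (mg1 : forall x, measurable [set a | g1 a = x])
  (mg2 : forall x, measurable [set a | g2 a = x]).

Lemma measurable_finvalued_rel (Q : X -> X -> Prop) :
  measurable [set a | Q (g1 a) (g2 a)].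
Proof.
have -> : [set a | Q (g1 a) (g2 a)] =
    \bigcup_(p in [set p : X * X | Q p.1 p.2]) ([set a | g1 a = p.1] `&` [set a | g2 a = p.2]).
  apply/seteqP; split => [a Qa|a [p Qp [/= -> ->]]] //.
  by exists (g1 a, g2 a).
apply: fin_bigcup_measurable => [|p _]; first exact: finite_finset.
exact: measurableI.
Qed.

Lemma measurable_fun_finvalued2 (R : realType) (h : X -> X -> R) :
  measurable_fun setT (fun a => h (g1 a) (g2 a)).
Proof.
move=> _ B mB; rewrite setTI.
exact: (measurable_finvalued_rel (fun x z => B (h x z))).
Qed.

End finite_valued.

Section integral_bounds.
Local Open Scope ereal_scope.
Context d (T : measurableType d) (R : realType) (mu : {measure set T -> \bar R}).

Lemma le_integral_ge0r (F G : T -> R) :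
  measurable_fun setT F -> measurable_fun setT G ->
  (forall x, 0 <= G x)%R -> (forall x, F x <= G x)%R ->
  \int[mu]_x (F x)%:E <= \int[mu]_x (G x)%:E.
Proof.
move=> mF mG G0 FG; rewrite integralE.
apply: le_trans (leeB (lexx _) (_ : 0 <= _)) _.
  by apply: integral_ge0 => x _; exact: funeneg_ge0.
rewrite sube0; apply: ge0_le_integral => //.
- by apply: measurable_funepos; apply/measurable_EFinP.
- by apply/measurable_EFinP.
- by move=> x _; rewrite funeposE /= ge_max !lee_fin FG G0.
Qed.

Lemma ge0_integral_sum_le (I : eqType) (s : seq I) (h : I -> T -> R) (c : I -> \bar R) :
  (forall i, measurable_fun setT (h i)) -> (forall i x, 0 <= h i x)%R ->
  (forall i, i \in s -> \int[mu]_x (h i x)%:E <= c i) ->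
  \int[mu]_x (\sum_(i <- s) h i x)%:E <= \sum_(i <- s) c i.
Proof.
move=> mh h0 hc; under eq_integral do rewrite -sumEFin.
rewrite ge0_integral_sum //.
- by rewrite big_seq_cond [leRHS]big_seq_cond; apply: lee_sum => i /andP [/hc].
- by move=> i; exact/measurable_EFinP.
- by move=> i x _; rewrite lee_fin.
Qed.

End integral_bounds.

Lemma le_div_of_mul_le (R : realFieldType) (b w c delta : R) :
  0 <= c -> 0 < delta -> delta <= w -> b * w <= c -> b <= c / delta.
Proof.
move=> c0 delta0 dw bwc; rewrite ler_pdivlMr //.
have [b0|b0] := leP 0 b; first by apply: le_trans bwc; rewrite ler_wpM2l.
by apply: le_trans c0; rewrite pmulr_lle0 // ltW.
Qed.

Lemma pert_set_tnth (R : realType) (X : finType) (N : nat) (Gamma : X -> 'I_N -> R)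
    (j : 'I_N) (a : N.-tuple R) (b : R) (x : X) :
  pert Gamma (set_tnth j (a, b)) x =
  \sum_(i < N | i != j) tnth a i * Gamma x i + b * Gamma x j.
Proof.
rewrite /pert (bigD1 j) //= tnth_set_tnth eqxx addrC; congr (_ + _).
by apply: eq_bigr => i /negbTE ij; rewrite tnth_set_tnth ij.
Qed.

Section gftpl.
Context (R : realType) (X : finType) (Y : Type) (N T : nat) (f : X -> Y -> R)
  (Gamma : X -> 'I_N -> R) (eps : R) (y : nat -> Y) (sel : nat -> N.-tuple R -> X).
Hypothesis f01 : forall x z, 0 <= f x z <= 1.
Hypothesis run : gftpl_run T f Gamma eps y sel.

Lemma gftpl_shift_gap_le (j : 'I_N) t (a : N.-tuple R) (b1 b2 : R) : (1 <= t <= T)%N ->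
  (b2 - b1) * (Gamma (sel t.+1 (set_tnth j (a, b1))) j
               - Gamma (sel t (set_tnth j (a, b2))) j) <= 1 + 2 * eps.
Proof.
move=> /andP [t1 tT].
set x := sel t (set_tnth j (a, b2)); set z := sel t.+1 (set_tnth j (a, b1)).
have t_run : (1 <= t <= T.+1)%N by rewrite t1 ltnW.
have t1_run : (1 <= t.+1 <= T.+1)%N by apply/andP; split; last rewrite ltnS.
have := run t_run (set_tnth j (a, b2)) z; have := run t1_run (set_tnth j (a, b1)) x.
rewrite !big_nat_recr //= !pert_set_tnth.
have := f01 x (y t); have := f01 z (y t).
lra.
Qed.

Variables (kappa : nat) (delta rho : R) (D : probability R R)
  (P : probability (N.-tuple R) R).
Hypotheses (delta0 : 0 < delta) (GammaP : kd_admissible Gamma kappa delta)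
  (eps0 : 0 <= eps) (disp : dispersed D rho ((1 + 2 * eps) / delta))
  (iidP : iid_law D P) (msel : forall t x, measurable [set a | sel t a = x]).

Definition coord_values (j : 'I_N) : seq R := undup [seq Gamma x j | x <- enum X].

Definition coord_rise t j v : set (N.-tuple R) :=
  [set a | Gamma (sel t a) j = v /\ v < Gamma (sel t.+1 a) j].

Definition coord_drop t j v : set (N.-tuple R) :=
  [set a | Gamma (sel t a) j = v /\ Gamma (sel t.+1 a) j < v].

Definition switch_indic t j v (a : N.-tuple R) : R :=
  \1_(coord_rise t j v) a + \1_(coord_drop t j v) a.

Definition switch_count t (a : N.-tuple R) : R :=
  \sum_(j < N) \sum_(v <- coord_values j) switch_indic t j v a.

Lemma Gamma_gap x x' j : Gamma x j < Gamma x' j -> delta <= Gamma x' j - Gamma x j.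
Proof.
case: GammaP => _ _ sep lt_xx'.
by rewrite -[leRHS]gtr0_norm ?subr_gt0 // distrC sep // lt_eqF.
Qed.

Lemma measurable_coord_rise t j v : measurable (coord_rise t j v).
Proof.
exact: (measurable_finvalued_rel (msel t) (msel t.+1)
  (fun x z => Gamma x j = v /\ v < Gamma z j)).
Qed.

Lemma measurable_coord_drop t j v : measurable (coord_drop t j v).
Proof.
exact: (measurable_finvalued_rel (msel t) (msel t.+1)
  (fun x z => Gamma x j = v /\ Gamma z j < v)).
Qed.

Lemma prob_coord_rise_le t j v : (1 <= t <= T)%N ->
  (P (coord_rise t j v) <= rho%:E)%E.
Proof.
move=> tT; apply: (iid_law_thin_le (j := j) iidP disp (measurable_coord_rise t j v)).
move=> a b1 b2 [_ v_lt] [x_v _]; rewrite -x_v in v_lt.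
have c0 : 0 <= 1 + 2 * eps by rewrite addr_ge0 ?mulr_ge0.
apply: (le_div_of_mul_le c0 delta0 (Gamma_gap v_lt)).
exact: gftpl_shift_gap_le.
Qed.

Lemma prob_coord_drop_le t j v : (1 <= t <= T)%N ->
  (P (coord_drop t j v) <= rho%:E)%E.
Proof.
move=> tT; apply: (iid_law_thin_le (j := j) iidP disp (measurable_coord_drop t j v)).
move=> a b1 b2 [x_v _] [_ lt_v]; rewrite -x_v in lt_v.
have c0 : 0 <= 1 + 2 * eps by rewrite addr_ge0 ?mulr_ge0.
apply: (le_div_of_mul_le c0 delta0 (Gamma_gap lt_v)).
by rewrite -mulrNN !opprB; exact: gftpl_shift_gap_le.
Qed.

Lemma switch_indic_ge0 t j v a : 0 <= switch_indic t j v a.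
Proof. by apply: addr_ge0; rewrite indicE. Qed.

Lemma measurable_switch_indic t j v : measurable_fun setT (switch_indic t j v).
Proof.
by apply: measurable_funD; apply: measurable_indic;
  [exact: measurable_coord_rise|exact: measurable_coord_drop].
Qed.

Lemma integral_switch_indic_le t j v : (1 <= t <= T)%N ->
  (\int[P]_a (switch_indic t j v a)%:E <= (rho + rho)%:E)%E.
Proof.
move=> tT; have mrise := measurable_coord_rise t j v.
have mdrop := measurable_coord_drop t j v.
under eq_integral do rewrite EFinD.
rewrite ge0_integralD //; [|exact/measurable_EFinP/measurable_indic..].
rewrite !integral_indic // !setIT EFinD.
by apply: leeD; [exact: prob_coord_rise_le|exact: prob_coord_drop_le].
Qed.

Lemma switch_count_ge0 t a : 0 <= switch_count t a.
Proof. by apply: sumr_ge0 => j _; apply: sumr_ge0 => v _; exact: switch_indic_ge0. Qed.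

Lemma measurable_switch_count t : measurable_fun setT (switch_count t).
Proof.
by apply: measurable_sum => j; apply: measurable_sum => v; exact: measurable_switch_indic.
Qed.

Lemma switch_count_ge1 t a : sel t a != sel t.+1 a -> 1 <= switch_count t a.
Proof.
case: GammaP => adm _ _ neq_sel.
have [j neq_j] : exists j, Gamma (sel t a) j != Gamma (sel t.+1 a) j.
  apply: contrapT => eq_j; move/eqP: neq_sel; apply; apply: adm => k.
  by apply/eqP/negPn/negP => neq_k; apply: eq_j; exists k.
set v := Gamma (sel t a) j.
have v_in : v \in coord_values j.
  by rewrite mem_undup; apply/mapP; exists (sel t a); rewrite ?mem_enum.
have switch_jv : switch_indic t j v a = 1.
  rewrite /switch_indic !indicE; case: ltgtP neq_j => // [v_lt|lt_v] _.
  - have rise : coord_rise t j v a by split.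
    have no_drop : ~ coord_drop t j v a by move=> [_ /ltW]; rewrite leNgt v_lt.
    by rewrite (mem_set rise) (memNset no_drop) addr0.
  - have drop : coord_drop t j v a by split.
    have no_rise : ~ coord_rise t j v a by move=> [_ /ltW]; rewrite leNgt lt_v.
    by rewrite (mem_set drop) (memNset no_rise) add0r.
rewrite /switch_count (bigD1 j) //= (bigD1_seq v) ?undup_uniq //= switch_jv.
rewrite -addrA lerDl addr_ge0 ?sumr_ge0 // => [w _|k _].
  exact: switch_indic_ge0.
by apply: sumr_ge0 => w _; exact: switch_indic_ge0.
Qed.

Lemma loss_diff_le_switch_count t a :
  f (sel t.+1 a) (y t) - f (sel t a) (y t) <= switch_count t a.
Proof.
have [eq_sel|neq_sel] := eqVneq (sel t a) (sel t.+1 a).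
  by rewrite eq_sel subrr switch_count_ge0.
apply: le_trans (switch_count_ge1 neq_sel).
by have := f01 (sel t.+1 a) (y t); have := f01 (sel t a) (y t); lra.
Qed.

Lemma integral_switch_count_le t : (1 <= t <= T)%N ->
  (\int[P]_a (switch_count t a)%:E <= (N%:R * kappa%:R * (rho + rho))%:E)%E.
Proof.
case: GammaP => _ kap _ tT.
have rho0 : 0 <= rho by rewrite -lee_fin; apply: le_trans (disp 0); exact: measure_ge0.
have values_le j :
    (\sum_(v <- coord_values j) (rho + rho)%:E <= (kappa%:R * (rho + rho))%:E)%E.
  rewrite sumEFin lee_fin big_const_seq count_predT iter_addr_0 -[_ *+ _]mulr_natl.
  by rewrite ler_wpM2r ?addr_ge0 // ler_nat; exact: kap.
have -> : (N%:R * kappa%:R * (rho + rho))%:E = (\sum_(j < N) (kappa%:R * (rho + rho))%:E)%E.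
  by rewrite sumEFin sumr_const card_ord -[(_ * _) *+ N]mulr_natl mulrA.
rewrite /switch_count; apply: ge0_integral_sum_le => [j|j x|j _].
- by apply: measurable_sum => v; exact: measurable_switch_indic.
- by apply: sumr_ge0 => v _; exact: switch_indic_ge0.
apply: le_trans (values_le j); apply: ge0_integral_sum_le => [v|v x|v _].
- exact: measurable_switch_indic.
- exact: switch_indic_ge0.
- exact: integral_switch_indic_le.
Qed.

End gftpl.

Unset Implicit Arguments.

Theorem lemma2p2 (R : realType) (X : finType) (Y : Type) (N T : nat)
  (f : X -> Y -> R) (Gamma : X -> 'I_N -> R)
  (kappa : nat) (delta eps rho : R)
  (D : probability R R) (P : probability (N.-tuple R) R)
  (y : nat -> Y) (sel : nat -> N.-tuple R -> X) :
  (forall x z, 0 <= f x z <= 1) ->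
  (forall x j, 0 <= Gamma x j <= 1) ->
  0 < delta ->
  kd_admissible Gamma kappa delta ->
  0 <= eps ->
  dispersed D rho ((1 + 2 * eps) / delta) ->
  iid_law D P ->
  (forall t (x : X), measurable [set a : N.-tuple R | sel t a = x]) ->
  @gftpl_run R Y N T X f Gamma eps y sel ->
  (\int[P]_a (\sum_(1 <= t < T.+1) (f (sel t.+1 a) (y t) - f (sel t a) (y t)))%:E
     <= (2 * T%:R * N%:R * kappa%:R * rho)%:E)%E.
Proof.
move=> f01 _ delta0 GammaP eps0 disp iidP msel run.
pose switches a := \sum_(1 <= t < T.+1) switch_count Gamma sel t a.
have loss_le_switches :
    (\int[P]_a (\sum_(1 <= t < T.+1) (f (sel t.+1 a) (y t) - f (sel t a) (y t)))%:E
     <= \int[P]_a (switches a)%:E)%E.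
  apply: le_integral_ge0r => [|||a].
  - apply: measurable_sum => t.
    exact: (measurable_fun_finvalued2 (msel t.+1) (msel t) (fun z x => f z (y t) - f x (y t))).
  - by apply: measurable_sum => t; exact: measurable_switch_count.
  - by move=> a; apply: sumr_ge0 => t _; exact: switch_count_ge0.
  - by apply: ler_sum => t _; exact: (loss_diff_le_switch_count y sel f01 GammaP).
apply: le_trans loss_le_switches _.
apply: le_trans (ge0_integral_sum_le (c := fun=> (N%:R * kappa%:R * (rho + rho))%:E) _ _ _) _.
- by move=> t; exact: measurable_switch_count.
- by move=> t a; exact: switch_count_ge0.
- move=> t; rewrite mem_index_iota ltnS => tT.
  exact: (integral_switch_count_le f01 run delta0 GammaP eps0 disp iidP msel tT).
by rewrite sumEFin lee_fin sumr_const_nat subn1 /= -[_ *+ T]mulr_natr; lra.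
Qed.
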